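(* (i) For $n\ge 3$, $\chi_{dom}(T_n)=n+1$. (ii) For $n\ge 2$, $\chi_{dom}(O_n)=\chi_{dom}(Q_n)=n+1$.
   Context: A dominated coloring of a graph is a proper coloring in which every color class is dominated by at least one vertex, i.e. for each color class $C$ there is a vertex adjacent to every vertex of $C$; $\chi_{dom}$ denotes the minimum number of colors in a dominated coloring. A cactus is a connected graph in which every block is an edge or a cycle. A chain triangular cactus of length $n$, $T_n$, is a cactus whose $n$ blocks are all triangles, each triangle has at most two cut-vertices, and each cut-vertex is shared by exactly two triangles (all such graphs of length $n$ are isomorphic). A square cactus chain of length $n$ is defined in the same way with every block a $4$-cycle; an internal square is an ortho-square if its two cut-vertices are adjacent and a para-square if they are not adjacent. $Q_n$ is the para-chain of length $n$ (all internal squares are para-squares) and $O_n$ is the ortho-chain of length $n$ (all internal squares are ortho-squares). *)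

From mathcomp Require Import all_boot.
Set Implicit Arguments. Unset Strict Implicit. Unset Printing Implicit Defensive.

Section Dom.
Variable T : finType.
Variable adj : rel T.  (* simple graph: symmetric irreflexive adjacency *)

Definition proper_coloring (k : nat) (f : T -> 'I_k) : Prop :=
  forall u v, adj u v -> f u != f v.

(* Dominated coloring: proper, and every color class C is dominated,
   i.e. some vertex is adjacent to every vertex of C. (Empty classes are
   vacuously dominated, so a k-coloring uses at most k colors.) *)
Definition dominated_coloring (k : nat) (f : T -> 'I_k) : Prop :=
  proper_coloring f /\ forall c : 'I_k, exists v : T, forall u, f u = c -> adj v u.

Definition chi_dom_is (m : nat) : Prop :=
  (exists f : T -> 'I_m, dominated_coloring f) /\
  (forall (k : nat) (f : T -> 'I_k), dominated_coloring f -> m <= k).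
End Dom.

Definition sym_adj (N : nat) (e : nat -> nat -> bool) : rel 'I_N :=
  fun x y => e x y || e y x.

(* ---------- Chain triangular cactus T_n ----------
   vertices 0..2n; triangle i (0 <= i < n) is {2i, 2i+1, 2i+2};
   cut vertices 2i (1 <= i <= n-1). Edges (u < v): v = u+1, or v = u+2 with u even. *)
Definition tri_e (u v : nat) : bool := (v == u.+1) || ((v == u.+2) && ~~ odd u).
Definition T_adj (n : nat) : rel 'I_(2 * n).+1 := sym_adj tri_e.

(* ---------- Square chains: vertices 0..3n, a_i = 3i (0 <= i <= n) ----------
   square i consists of 3i, 3i+1, 3i+2, 3i+3; cut vertices a_1..a_{n-1}. *)

(* Para-chain Q_n: square i is the 4-cycle 3i - 3i+1 - 3i+3 - 3i+2 - 3i,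
   so its cut vertices 3i and 3i+3 are not adjacent. *)
Definition para_e (u v : nat) : bool :=
  [|| (u %% 3 == 0) && ((v == u + 1) || (v == u + 2)),
      (u %% 3 == 1) && (v == u + 2)
    | (u %% 3 == 2) && (v == u + 1)].
Definition Q_adj (n : nat) : rel 'I_(3 * n).+1 := sym_adj para_e.

(* Ortho-chain O_n: square i is the 4-cycle 3i - 3i+3 - 3i+1 - 3i+2 - 3i,
   so its cut vertices 3i and 3i+3 are adjacent. *)
Definition ortho_e (u v : nat) : bool :=
  ((u %% 3 == 0) && ((v == u + 2) || (v == u + 3)))
  || ((u %% 3 == 1) && ((v == u + 1) || (v == u + 2))).
Definition O_adj (n : nat) : rel 'I_(3 * n).+1 := sym_adj ortho_e.
Arguments T_adj n : clear implicits.
Arguments Q_adj n : clear implicits.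
Arguments O_adj n : clear implicits.

From mathcomp Require Import all_boot zify.

(* For the lower bounds,
   a colour class is an independent set inside the neighbourhood of a
   dominating vertex.  In T_n such a set has at most one vertex on each side of
   its dominator, so 2k >= 2n+1.  In Q_n it consists of at most two cut
   vertices or of at most four other vertices; counting cut vertices twice
   gives 4k >= 4n+2.  In O_n two non-cut vertices share a colour only if they
   are 3i-2 and 3i+2 for a cut vertex 3i, so the 2n non-cut vertices need at
   least 2n - (n-1) colours. *)

Set Implicit Arguments.
Unset Strict Implicit.
Unset Printing Implicit Defensive.

Section DominatedColoringBounds.
Variables (T : finType) (adj : rel T) (k : nat) (f : T -> 'I_k).
Hypothesis domf : dominated_coloring adj f.

Lemma same_color_nonadj u v : f u = f v -> ~~ adj u v.
Proof. by case: domf => proper _ fuv; apply/negP => /proper; rewrite fuv eqxx. Qed.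

Lemma exists_dominator : exists d : 'I_k -> T, forall u, adj (d (f u)) u.
Proof. by case: domf => _ /fin_all_exists[d dP]; exists d => u; apply: dP. Qed.

Lemma dominated_card_le_labels (X L : finType) (pi : X -> T) (lab : T -> X -> L) :
  (forall v x y, adj v (pi x) -> adj v (pi y) -> ~~ adj (pi x) (pi y) ->
     lab v x = lab v y -> x = y) ->
  #|X| <= k * #|L|.
Proof.
move=> labP; have [d dP] := exists_dominator.
pose g x := (f (pi x), lab (d (f (pi x))) x).
have g_inj : injective g.
  move=> x y [fxy labxy]; apply: (labP (d (f (pi x)))) => //.
  - by rewrite fxy.
  - exact: same_color_nonadj.
  - by rewrite labxy fxy.
by have := leq_card g g_inj; rewrite card_prod card_ord.
Qed.

Lemma dominated_card_le_pairs (S J : finType) (pi : S -> T) (a b : J -> S) :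
  (forall v x y, adj v (pi x) -> adj v (pi y) -> ~~ adj (pi x) (pi y) ->
     x = y \/ exists j, (x, y) = (a j, b j) \/ (x, y) = (b j, a j)) ->
  #|S| <= k + #|J|.
Proof.
move=> pairP; have [d dP] := exists_dominator.
pose B := [set b j | j in [pred j | f (pi (a j)) == f (pi (b j))]].
have inj_offB : {in ~: B &, injective (f \o pi)}.
  move=> x y; rewrite !inE => xB yB /= fxy.
  have dy : adj (d (f (pi x))) (pi y) by rewrite fxy.
  case: (pairP _ x y (dP _) dy (same_color_nonadj fxy)) => // [[j [[] |[]]]] xj yj;
    subst x y.
  - by case/imsetP: yB; exists j => //; rewrite inE fxy.
  - by case/imsetP: xB; exists j => //; rewrite inE fxy.
have cardB : #|B| <= #|J| := leq_trans (leq_imset_card _ _) (max_card _).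
have cardCB : #|~: B| <= k by rewrite -[k]card_ord; apply: leq_card_in inj_offB.
by rewrite -(cardsC B) addnC leq_add.
Qed.

End DominatedColoringBounds.

Lemma sym_adj_dominated_coloring (N m : nat) (e : nat -> nat -> bool) (col dom : nat -> nat) :
  (forall u, u <= N -> col u <= m) ->
  (forall c, c <= m -> dom c <= N) ->
  (forall u v, u <= N -> v <= N -> e u v || e v u -> col u != col v) ->
  (forall u, u <= N -> e (dom (col u)) u || e u (dom (col u))) ->
  exists f : 'I_N.+1 -> 'I_m.+1, dominated_coloring (sym_adj e) f.
Proof.
move=> col_le dom_le col_proper col_dom.
have colK (u : 'I_N.+1) : (inord (col u) : 'I_m.+1) = col u :> nat.
  by rewrite inordK // ltnS col_le ?leq_ord.
exists (fun u => inord (col u)); split=> [u v uv | c].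
  by apply/eqP => /(congr1 val); rewrite /= !colK; apply/eqP/col_proper; rewrite ?leq_ord.
exists (inord (dom c)) => u /(congr1 val); rewrite /= colK => <-.
by rewrite /sym_adj inordK ?ltnS ?dom_le ?col_le ?leq_ord //; apply: col_dom (leq_ord u).
Qed.

(* Colour c is {2c-1, 2c+2} (those that exist), dominated by 2c, except that
   vertices 2 and 3 are swapped to make class 0 = {0, 3} independent; that
   class is dominated by 2. *)
Definition T_color (u : nat) : nat :=
  if u == 2 then 2 else if u == 3 then 0 else if odd u then u./2 + 1 else u./2 - 1.

Definition T_dominator (c : nat) : nat := if c == 0 then 2 else c.*2.

Lemma exists_T_dominated_coloring n :
  2 <= n -> exists f : 'I_(2 * n).+1 -> 'I_n.+1, dominated_coloring (T_adj n) f.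
Proof.
move=> n_ge2; apply: (sym_adj_dominated_coloring (col := T_color) (dom := T_dominator)).
- by move=> u; rewrite /T_color; repeat case: ifP; lia.
- by move=> c; rewrite /T_dominator; case: ifP; lia.
- by move=> u v; rewrite /tri_e /T_color; repeat case: ifP; lia.
- by move=> u; rewrite /tri_e /T_color /T_dominator; repeat case: ifP; lia.
Qed.

Lemma T_dominated_coloring_lb n k (f : 'I_(2 * n).+1 -> 'I_k) :
  dominated_coloring (T_adj n) f -> n < k.
Proof.
move=> domf.
have labP (v x y : 'I_(2 * n).+1) : T_adj n v x -> T_adj n v y -> ~~ T_adj n x y ->
    (x < v) = (y < v) -> x = y.
  by rewrite /T_adj /sym_adj /tri_e => *; apply: ord_inj; lia.
by have := dominated_card_le_labels domf labP; rewrite card_ord card_bool; lia.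
Qed.

Definition sq_cut n (i : 'I_n.+1) : 'I_(3 * n).+1 := inord (3 * i).
Definition sq_mid n (s : bool) (i : 'I_n) : 'I_(3 * n).+1 := inord (3 * i + s + 1).

Lemma sq_cutE n (i : 'I_n.+1) : sq_cut i = 3 * i :> nat.
Proof. by rewrite /sq_cut inordK //; have := ltn_ord i; lia. Qed.

Lemma sq_midE n s (i : 'I_n) : sq_mid s i = 3 * i + s + 1 :> nat.
Proof. by rewrite /sq_mid inordK //; have := ltn_ord i; lia. Qed.

(* Colour c is {3c-3, 3c-2, 3c+2} (those that exist), dominated by 3c; the last
   vertex 3n joins colour n-1, whose dominator 3n-3 is adjacent to it. *)
Definition O_color (n u : nat) : nat :=
  if u == 3 * n then n.-1 else if u %% 3 == 2 then u %/ 3 else (u %/ 3).+1.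

Lemma exists_O_dominated_coloring n :
  2 <= n -> exists f : 'I_(3 * n).+1 -> 'I_n.+1, dominated_coloring (O_adj n) f.
Proof.
move=> n_ge2; apply: (sym_adj_dominated_coloring (col := O_color n) (dom := muln 3)).
- by move=> u; rewrite /O_color; repeat case: ifP; lia.
- by move=> c /=; lia.
- by move=> u v; rewrite /ortho_e /O_color; repeat case: ifP; lia.
- by move=> u; rewrite /ortho_e /O_color; repeat case: ifP; lia.
Qed.

Lemma ortho_adj_mid i (s : bool) y :
  ortho_e (3 * i + s + 1) y || ortho_e y (3 * i + s + 1) =
  if s then (y == 3 * i) || (y == 3 * i + 1) else (y == 3 * i + 2) || (y == 3 * i + 3).
Proof. by rewrite /ortho_e; case: s; apply/idP/idP; lia. Qed.

Lemma O_dominated_coloring_lb n k (f : 'I_(3 * n.+1).+1 -> 'I_k) :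
  dominated_coloring (O_adj n.+1) f -> n.+1 < k.
Proof.
move=> domf.
have pairP v (x y : bool * 'I_n.+1) :
    O_adj _ v (sq_mid x.1 x.2) -> O_adj _ v (sq_mid y.1 y.2) ->
    ~~ O_adj _ (sq_mid x.1 x.2) (sq_mid y.1 y.2) ->
    let a j := (false, widen_ord (leqnSn n) j) in let b j := (true, lift ord0 j) in
    x = y \/ exists j, (x, y) = (a j, b j) \/ (x, y) = (b j, a j).
  case: x y => [s i] [t j]; rewrite /O_adj /sym_adj !sq_midE /= => vx vy.
  rewrite orbC ortho_adj_mid in vx; rewrite orbC ortho_adj_mid in vy.
  rewrite ortho_adj_mid => xy.
  have : (s = t /\ i = j :> nat) \/ (~~ s /\ t /\ j = i.+1 :> nat) \/
         (s /\ ~~ t /\ i = j.+1 :> nat).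
    by case: s t vx vy xy => [] [] /=; lia.
  have := ltn_ord i; have := ltn_ord j.
  move=> j_lt i_lt [[-> /ord_inj ->]|[[/negbTE -> [-> ji]]|[-> [/negbTE -> ij]]]];
    [by left|right|right].
  - have i_lt' : i < n by lia.
    exists (Ordinal i_lt'); left.
    by congr ((_, _), (_, _)); apply: ord_inj; rewrite /= ?lift0.
  - have j_lt' : j < n by lia.
    exists (Ordinal j_lt'); right.
    by congr ((_, _), (_, _)); apply: ord_inj; rewrite /= ?lift0.
have := dominated_card_le_pairs domf pairP.
by rewrite card_prod card_bool !card_ord; lia.
Qed.

(* Colour c <= n/2 is the pair of cut vertices {6c, 6c+3}, dominated by 6c+1
   (by 3n-2 when 6c = 3n); colour n/2+1+j consists of the non-cut vertices of
   squares 2j and 2j+1, dominated by the cut vertex 6j+3 between them. *)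
Definition Q_color (n u : nat) : nat :=
  if u %% 3 == 0 then (u %/ 3)./2 else n./2 + (u %/ 3)./2 + 1.

Definition Q_dominator (n c : nat) : nat :=
  if c <= n./2 then minn (6 * c + 1) (3 * n - 2) else 3 * (2 * (c - n./2) - 1).

Lemma exists_Q_dominated_coloring n :
  2 <= n -> exists f : 'I_(3 * n).+1 -> 'I_n.+1, dominated_coloring (Q_adj n) f.
Proof.
move=> n_ge2; apply: (sym_adj_dominated_coloring (col := Q_color n) (dom := Q_dominator n)).
- by move=> u; rewrite /Q_color; case: ifP; lia.
- by move=> c; rewrite /Q_dominator; case: ifP; lia.
- by move=> u v; rewrite /para_e /Q_color; repeat case: ifP; lia.
- by move=> u; rewrite /para_e /Q_color /Q_dominator; repeat case: ifP; lia.
Qed.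

Lemma para_adj_cut i y :
  para_e (3 * i) y || para_e y (3 * i) =
  [|| y == 3 * i + 1, y == 3 * i + 2, y + 1 == 3 * i | y + 2 == 3 * i].
Proof. by rewrite /para_e; apply/idP/idP; lia. Qed.

Lemma para_adj_mid i (s : bool) y :
  para_e (3 * i + s + 1) y || para_e y (3 * i + s + 1) = (y == 3 * i) || (y == 3 * i + 3).
Proof. by rewrite /para_e; case: s; apply/idP/idP; lia. Qed.

Lemma Q_dominated_coloring_lb n k (f : 'I_(3 * n).+1 -> 'I_k) :
  dominated_coloring (Q_adj n) f -> n < k.
Proof.
move=> domf.
pose pi (x : (bool * 'I_n.+1) + (bool * 'I_n)) :=
  match x with inl (_, i) => sq_cut i | inr (s, i) => sq_mid s i end.
(* A class lies among the cut vertices 3i, 3i+3 or among the non-cut vertices of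
   squares i-1, i, so the parity of i separates its members. *)
pose lab (_ : 'I_(3 * n).+1) (x : (bool * 'I_n.+1) + (bool * 'I_n)) :=
  match x with inl (s, i) => (s, odd i) | inr (s, i) => (odd i, s) end.
have labP v x y : Q_adj n v (pi x) -> Q_adj n v (pi y) -> ~~ Q_adj n (pi x) (pi y) ->
    lab v x = lab v y -> x = y.
  rewrite /Q_adj /sym_adj ![para_e v _ || _]orbC.
  case: x y => [[s i]|[s i]] [[t j]|[t j]] /=;
    rewrite ?sq_cutE ?sq_midE ?para_adj_cut ?para_adj_mid => vx vy _ [lab1 lab2];
    first [by exfalso; lia | (suff -> : i = j by congruence); apply: ord_inj; lia].
have := dominated_card_le_labels domf labP.
by rewrite !card_sum !card_prod !card_bool !card_ord; lia.
Qed.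

Theorem mainTheorem7 :
  (forall n : nat, 3 <= n -> chi_dom_is (T_adj n) n.+1) /\
  (forall n : nat, 2 <= n -> chi_dom_is (O_adj n) n.+1 /\ chi_dom_is (Q_adj n) n.+1).
Proof.
split=> [n n_ge3 | [//|n] n_ge2].
  split=> [|k f]; first exact: exists_T_dominated_coloring (ltnW n_ge3).
  exact: T_dominated_coloring_lb.
split; split=> [|k f].
- exact: exists_O_dominated_coloring.
- exact: O_dominated_coloring_lb.
- exact: exists_Q_dominated_coloring.
- exact: Q_dominated_coloring_lb.
Qed.
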